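(* For every $[p,q]\in\hat D_n$, the evaluation functional $\delta_{[p,q]}:\mathcal{A}(D_n)\to\mathbb{C}$, $a\mapsto\hat a([p,q])$, is a continuous unital homomorphism for the pointwise product, and it is a character (i.e. additionally satisfies $\delta_{[p,q]}(a^* )=\overline{\delta_{[p,q]}(a)}$ for all $a$) if and only if $[p,q]\in D_{n,\mathrm{ext}}$.
   Context: Fix $n\ge1$. $D_n=Z/U(1)$, $Z=\{r\in\mathbb{C}^{1+n}:-|r^0|^2+\sum_{i\ge1}|r^i|^2=-1\}$. $\hat D_n=\hat Z/\mathbb{C}^*$, $\hat Z=\{(p,q)\in\mathbb{C}^{1+n}\times\mathbb{C}^{1+n}:-p^0q^0+\sum_{i\ge1}p^iq^i=-1\}$, $z\cdot(p,q)=(zp,q/z)$. $\Delta_D:D_n\to\hat D_n$, $[r]\mapsto[r,\bar r]$. $\tau([p,q])=[\bar q,\bar p]$ is an anti-holomorphic involution of $\hat D_n$, and $D_{n,\mathrm{ext}}=\{x\in\hat D_n:\tau(x)=x\}$. $\mathcal{A}(D_n)=\{\hat a\circ\Delta_D:\hat a\in\mathcal{O}(\hat D_n)\}$, where $\hat a$ is uniquely determined by $a$; it is a commutative unital $*$-algebra with pointwise operations and $a^*=\bar a$ (so $\widehat{a^*}=\overline{\hat a\circ\tau}$), and a Fréchet space with seminorms $\|a\|_{D_n,K}=\sup_K|\hat a|$, $K\subseteq\hat D_n$ compact. *)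

From HB Require Import structures.
From mathcomp Require Import all_boot all_order all_algebra.
From mathcomp Require Import complex.
From mathcomp Require Import all_classical all_reals all_analysis.
Import Order.TTheory GRing.Theory Num.Theory ComplexField.
Import numFieldNormedType.Exports numFieldTopology.Exports.
Local Open Scope ring_scope.
Local Open Scope classical_set_scope.

Set Implicit Arguments.
Unset Strict Implicit.
Unset Printing Implicit Defensive.

Definition CC (R : realType) : numClosedFieldType := R[i].

Definition cabs (R : realType) (z : CC R) : R := complex.Re `|z|.

(* C^{1+n}, coordinates indexed 0..n. *)
Definition vec (R : realType) (n : nat) := 'rV[CC R]_(n.+1).

Definition amb (R : realType) (n : nat) := (vec R n * vec R n)%type.

Definition bilin (R : realType) (n : nat) (p q : vec R n) : CC R :=
  - (p ord0 ord0 * q ord0 ord0)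
  + \sum_(i < n) p ord0 (lift ord0 i) * q ord0 (lift ord0 i).

Definition Zhat (R : realType) (n : nat) : set (amb R n) :=
  [set pq | bilin pq.1 pq.2 = -1].
Arguments Zhat {R} n.

Definition cact (R : realType) (n : nat) (z : CC R) (pq : amb R n) : amb R n :=
  (z *: pq.1, z^-1 *: pq.2).

(* Two points of \hat Z represent the same point of \hat D_n = \hat Z / C^*. *)
Definition same_class (R : realType) (n : nat) (x y : amb R n) : Prop :=
  exists z : CC R, z != 0 /\ y = cact z x.

Definition tau (R : realType) (n : nat) (pq : amb R n) : amb R n :=
  (map_mx (fun z : CC R => z^*) pq.2, map_mx (fun z : CC R => z^*) pq.1).

(* [p,q] \in D_{n,ext}  <->  tau([p,q]) = [p,q] in \hat D_n. *)
Definition in_Dext (R : realType) (n : nat) (pq : amb R n) : Prop :=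
  same_class pq (tau pq).

(* Holomorphic function on an open subset U of C^{1+n} x C^{1+n}:
   complex (Frechet) differentiable at every point of U. *)
Definition holo_on (R : realType) (n : nat) (U : set (amb R n))
    (g : amb R n -> (CC R)^o) : Prop :=
  forall x, U x -> differentiable g x.

(* Holomorphic function on \hat D_n = \hat Z / C^*, represented by its
   pull-back f to \hat Z (only the values of f on \hat Z matter):
   f is C^*-invariant on \hat Z, and holomorphic on the complex submanifold
   \hat Z, i.e. locally the restriction of an ambient holomorphic function. *)
Definition holo_Dhat (R : realType) (n : nat) (f : amb R n -> CC R) : Prop :=
  (forall x, Zhat n x -> forall z : CC R, z != 0 -> f (cact z x) = f x) /\
  (forall x, Zhat n x ->
     exists U : set (amb R n), [/\ open U, U x &
       exists g : amb R n -> (CC R)^o,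
         holo_on U g /\ (forall y, U y -> Zhat n y -> f y = g y)]).

(* The algebra A(D_n), each element a being represented by \hat a
   (a = \hat a o Delta_D, \hat a uniquely determined by a).
   Pointwise operations; star: \hat{a^*} = conj (\hat a o tau). *)
Definition Aalg (R : realType) (n : nat) : set (amb R n -> CC R) :=
  [set f | holo_Dhat f].
Arguments Aalg {R} n.

Definition Aone (R : realType) (n : nat) : amb R n -> CC R := fun _ => 1.
Arguments Aone {R} n.
Definition Aadd (R : realType) (n : nat) (f g : amb R n -> CC R) :=
  fun x => f x + g x.
Definition Amul (R : realType) (n : nat) (f g : amb R n -> CC R) :=
  fun x => f x * g x.
Definition Ascale (R : realType) (n : nat) (c : CC R) (f : amb R n -> CC R) :=
  fun x => c * f x.
Definition Asub (R : realType) (n : nat) (f g : amb R n -> CC R) :=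
  fun x => f x - g x.
Definition Astar (R : realType) (n : nat) (f : amb R n -> CC R) :=
  fun x => (f (tau x))^*.

Definition of_hat (R : realType) (n : nat) (f : amb R n -> CC R) :=
  fun r : vec R n => f (r, map_mx (fun z : CC R => z^*) r).

(* Seminorm ||a||_{D_n,K} = sup_K |\hat a|, K a compact subset of \hat Z
   (compact subsets of \hat D_n are exactly images of compact subsets of
   \hat Z). *)
Definition seminorm (R : realType) (n : nat) (K : set (amb R n))
    (f : amb R n -> CC R) : R :=
  sup [set cabs (f x) | x in K].

Definition compact_in_Zhat (R : realType) (n : nat) (K : set (amb R n)) :=
  compact K /\ K `<=` Zhat n.

(* Continuity of a map A(D_n) -> C for the Frechet topology defined by the
   (directed) family of seminorms ||.||_K. *)
Definition A_continuous (R : realType) (n : nat)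
    (phi : (amb R n -> CC R) -> CC R) : Prop :=
  forall f, Aalg n f -> forall eps : R, 0 < eps ->
    exists K : set (amb R n), compact_in_Zhat K /\
    exists2 eta : R, 0 < eta &
      forall g, Aalg n g -> seminorm K (Asub g f) < eta ->
        cabs (phi g - phi f) < eps.

Definition unital_hom (R : realType) (n : nat)
    (phi : (amb R n -> CC R) -> CC R) : Prop :=
  [/\ phi (Aone n) = 1,
      (forall f g, Aalg n f -> Aalg n g -> phi (Aadd f g) = phi f + phi g),
      (forall c f, Aalg n f -> phi (Ascale c f) = c * phi f) &
      (forall f g, Aalg n f -> Aalg n g -> phi (Amul f g) = phi f * phi g)].

Definition is_character (R : realType) (n : nat)
    (phi : (amb R n -> CC R) -> CC R) : Prop :=
  unital_hom phi /\ (forall f, Aalg n f -> phi (Astar f) = (phi f)^*).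

Definition delta (R : realType) (n : nat) (pq : amb R n) :
    (amb R n -> CC R) -> CC R := fun f => f pq.

From HB Require Import structures.
From mathcomp Require Import all_boot all_order all_algebra.
From mathcomp Require Import complex.
From mathcomp Require Import all_classical all_reals all_analysis.
From mathcomp Require Import ring.
Import Order.TTheory GRing.Theory Num.Theory ComplexField.
Import numFieldNormedType.Exports numFieldTopology.Exports.
Local Open Scope ring_scope.
Local Open Scope classical_set_scope.

(* Evaluation at a point of \hat Z is trivially a continuous unital
   homomorphism, and it preserves the star as soon as tau fixes the point of
   \hat D_n.  Conversely, the invariant functions p^i q^j belong to A(D_n), so
   a star-preserving evaluation at (p, q) yields conj(q^i) conj(p^j) = p^i q^j
   for all i, j; since -p^0 q^0 + sum p^i q^i = -1 some p^m q^m is nonzero,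
   and z := conj(q^m) / p^m then satisfies tau (p, q) = (z p, q / z). *)

Section ProductProjections.
Variables (K : numFieldType) (U V : normedModType K).

Lemma differentiable_fst (x : (U * V)%type) : differentiable (@fst U V) x.
Proof.
have fst_linear : linear (@fst U V) by [].
pose fstL : {linear (U * V)%type -> U} :=
  HB.pack (@fst U V) (GRing.isLinear.Build _ _ _ _ _ fst_linear).
by apply: (@linear_differentiable _ _ _ fstL) => y; exact: cvg_fst.
Qed.

Lemma differentiable_snd (x : (U * V)%type) : differentiable (@snd U V) x.
Proof.
have snd_linear : linear (@snd U V) by [].
pose sndL : {linear (U * V)%type -> V} :=
  HB.pack (@snd U V) (GRing.isLinear.Build _ _ _ _ _ snd_linear).
by apply: (@linear_differentiable _ _ _ sndL) => y; exact: cvg_snd.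
Qed.

End ProductProjections.

Section EvaluationFunctionals.
Variables (R : realType) (n : nat).
Implicit Types (x y : amb R n) (f : amb R n -> CC R).

Definition coord_product (i j : 'I_n.+1) : amb R n -> CC R :=
  fun x => x.1 ord0 i * x.2 ord0 j.

Lemma coord_product_in_Aalg (i j : 'I_n.+1) : Aalg n (coord_product i j).
Proof.
split=> [x _ z z_neq0 | x _].
  by rewrite /coord_product /cact /= !mxE mulrACA mulfV // mul1r.
exists setT; split=> //; first exact: openT.
exists (coord_product i j : amb R n -> (CC R)^o); split=> // y _.
have coord_differentiable (k : 'I_n.+1) (pr : amb R n -> vec R n) :
    (forall y, differentiable pr y) ->
    differentiable (fun x => (pr x ord0 k : (CC R)^o)) y.
  move=> pr_differentiable.
  exact: differentiable_comp (pr_differentiable y) (differentiable_coord _ ord0 k).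
exact: differentiableM (coord_differentiable _ _ (@differentiable_fst _ _ _))
                       (coord_differentiable _ _ (@differentiable_snd _ _ _)).
Qed.

Lemma delta_unital_hom x : unital_hom (delta x).
Proof. by []. Qed.

Lemma delta_A_continuous x : Zhat n x -> A_continuous (delta x).
Proof.
move=> Zx f _ eps eps_gt0; exists [set x]; split.
  by split=> [|y ->]; [exact: compact_set1 | exact: Zx].
by exists eps => // g _; rewrite /seminorm image_set1 sup1.
Qed.

Lemma delta_Astar_of_in_Dext x f :
  Zhat n x -> in_Dext x -> Aalg n f -> delta x (Astar f) = (delta x f)^*.
Proof.
by move=> Zx [z [z_neq0 tau_x]] [f_inv _]; rewrite /delta /Astar tau_x f_inv.
Qed.

Lemma Zhat_coord_product_neq0 {x} :
  Zhat n x -> exists m, coord_product m m x != 0.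
Proof.
move=> Zx; apply/existsP; apply: contraT; rewrite negb_exists => /forallP xm0.
have {}xm0 i : x.1 ord0 i * x.2 ord0 i = 0 by apply/eqP/negbNE/xm0.
move: Zx; rewrite /Zhat /bilin /= xm0 big1 => [|k _]; last exact: xm0.
by move/eqP; rewrite oppr0 addr0 eq_sym oppr_eq0 oner_eq0.
Qed.

(* The rank-one matrix (p^i q^j)_{i,j} determines (p, q) up to the C^* action. *)
Lemma same_class_of_coord_product {x y m} :
  coord_product m m x != 0 ->
  (forall i j, coord_product i j y = coord_product i j x) -> same_class x y.
Proof.
case: x y => x1 x2 [y1 y2]; rewrite /coord_product /= => xm_neq0 yx.
have [x1m_neq0 _] : x1 ord0 m != 0 /\ x2 ord0 m != 0.
  by apply/andP; rewrite -negb_or -mulf_eq0.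
have [y1m_neq0 y2m_neq0] : y1 ord0 m != 0 /\ y2 ord0 m != 0.
  by apply/andP; rewrite -negb_or -mulf_eq0 yx.
exists (y1 ord0 m / x1 ord0 m); split; first by rewrite mulf_neq0 ?invr_eq0.
rewrite /cact /=; congr (_, _); apply/rowP => k; rewrite !mxE.
  apply: (mulIf y2m_neq0); rewrite yx.
  have -> : y1 ord0 m / x1 ord0 m * x1 ord0 k * y2 ord0 m
      = (y1 ord0 m * y2 ord0 m) * x1 ord0 k / x1 ord0 m by ring.
  by rewrite yx; field.
by apply: (mulfI y1m_neq0); rewrite yx; field; apply/andP.
Qed.

Lemma in_Dext_of_delta_Astar x :
  Zhat n x -> (forall f, Aalg n f -> delta x (Astar f) = (delta x f)^*) ->
  in_Dext x.
Proof.
move=> Zx delta_star; have [m xm_neq0] := Zhat_coord_product_neq0 Zx.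
apply: (same_class_of_coord_product xm_neq0) => i j.
have := delta_star _ (coord_product_in_Aalg i j).
rewrite /delta /Astar => /(congr1 (fun z : CC R => z^*)).
by rewrite !conjCK.
Qed.

End EvaluationFunctionals.

Theorem proposition4p8 (R : realType) (n : nat) (hn : (1 <= n)%N)
    (p q : vec R n) (hpq : Zhat n (p, q)) :
  [/\ A_continuous (delta (p, q)),
      unital_hom (delta (p, q)) &
      (is_character (delta (p, q)) <-> in_Dext (p, q))].
Proof.
split; [exact: delta_A_continuous | exact: delta_unital_hom | split].
  by case=> _; exact: in_Dext_of_delta_Astar.
move=> Dext; split=> [|f]; first exact: delta_unital_hom.
exact: delta_Astar_of_in_Dext.
Qed.
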